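(* Under the setting in the context (in particular $\hat\tau$ permutation-invariant), for every subset $\mathcal S_u\subseteq\mathcal U$, every $j\in\mathcal S_u$ and every $k\in\mathcal C$, $$\mathbb E\Big[\frac{\mathbf 1\{R_j>\mathcal Q_j,\ T_k\le\hat\tau,\ \hat{\mathcal S}_u=\mathcal S_u\}}{\sum_{i\in\mathcal C\cup\{j\}}\mathbf 1\{T_i\le\hat\tau\}}\Big]=\mathbb E\Big[\frac{\mathbf 1\{R_k>\mathcal Q_j,\ T_k\le\hat\tau,\ \hat{\mathcal S}_u=\mathcal S_u\}}{\sum_{i\in\mathcal C\cup\{j\}}\mathbf 1\{T_i\le\hat\tau\}}\Big],$$ where $\mathcal Q_j$ is the $\lceil(1-\alpha)(|\hat{\mathcal S}_c|+1)\rceil$-th smallest value of $\{R_i: i\in\hat{\mathcal S}_c\cup\{j\}\}$.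
   Context: Setting: $\hat\mu,g:\mathbb R^d\to\mathbb R$ fixed deterministic measurable functions; calibration indices $\mathcal C$ ($|\mathcal C|=n$) and disjoint test indices $\mathcal U$ ($|\mathcal U|=m$); $(X_i,Y_i)$, $i\in\mathcal C\cup\mathcal U$, i.i.d.; $T_i=g(X_i)$, $R_i=|Y_i-\hat\mu(X_i)|$; $\alpha\in(0,1)$. The threshold is $\hat\tau=\tau(T_i:i\in\mathcal C\cup\mathcal U)$ for a deterministic measurable $\tau:\mathbb R^{n+m}\to\mathbb R$ invariant under permutations of its arguments; $\hat{\mathcal S}_u=\{i\in\mathcal U:T_i\le\hat\tau\}$ and $\hat{\mathcal S}_c=\{i\in\mathcal C:T_i\le\hat\tau\}$. On the event $\hat{\mathcal S}_u=\mathcal S_u\ni j$ the denominator is at least $1$. *)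

From HB Require Import structures.
From mathcomp Require Import all_boot all_order all_algebra.
From mathcomp Require Import all_classical all_reals all_analysis.
Set Implicit Arguments. Unset Strict Implicit. Unset Printing Implicit Defensive.
Import Order.TTheory GRing.Theory Num.Theory.
Local Open Scope classical_set_scope.
Local Open Scope ring_scope.

Section defs.
Context {R : realType} {dO : measure_display} {Omega : measurableType dO}.

(* Mutual independence of a finite family of random elements Z_i
   (product rule for every family of measurable sets; taking B_i = setT
   recovers every finite subfamily). *)
Definition mutually_independent {dT} {T : measurableType dT} (N : nat)
    (P : probability Omega R) (Z : 'I_N -> Omega -> T) : Prop :=
  forall B : 'I_N -> set T, (forall i, measurable (B i)) ->
    P (\bigcap_(i in [set: 'I_N]) (Z i @^-1` B i)) =
    (\prod_(i < N) P (Z i @^-1` B i))%E.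

Definition identically_distributed {dT} {T : measurableType dT} (N : nat)
    (P : probability Omega R) (Z : 'I_N -> Omega -> T) : Prop :=
  forall i j : 'I_N, forall B : set T, measurable B ->
    P (Z i @^-1` B) = P (Z j @^-1` B).

Definition iid {dT} {T : measurableType dT} (N : nat)
    (P : probability Omega R) (Z : 'I_N -> Omega -> T) : Prop :=
  (forall i, measurable_fun setT (Z i)) /\
  mutually_independent P Z /\ identically_distributed P Z.

(* threshold hat tau = tau(T_i : i in C u U), indices C u U = 'I_N *)
Definition tauhat (N : nat) (tau : N.-tuple R -> R) (T : 'I_N -> Omega -> R)
  (w : Omega) : R := tau [tuple T i w | i < N].

Definition Shat (N : nat) (tau : N.-tuple R -> R) (T : 'I_N -> Omega -> R)
  (A : {set 'I_N}) (w : Omega) : {set 'I_N} :=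
  [set i in A | T i w <= tauhat tau T w].

Definition kth_smallest (k : nat) (s : seq R) : R := nth 0 (sort <=%R s) k.-1.

Definition Qj (N : nat) (alpha : R) (tau : N.-tuple R -> R)
  (T Rs : 'I_N -> Omega -> R) (C : {set 'I_N}) (j : 'I_N) (w : Omega) : R :=
  let Sc := Shat tau T C w in
  kth_smallest `|Num.ceil ((1 - alpha) * (#|Sc|%:R + 1))|%N
    [seq Rs i w | i in j |: Sc].

End defs.

(* Write the integrand as a function [weight T Rs a w] of the scores T, the
   residuals Rs and the index a whose residual is compared with Q_j.  The
   transposition s = (j k) exchanges the two sides of the identity:
   1. (deterministic) [weight_tperm]: relabelling the units by s turns the
      weight of R_j into the weight of R_k.  The permutation-invariant
      threshold, the selected test set and the denominator are unchanged;
      when T_j and T_k are both selected, Q_j is computed from an s-stable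
      set of residuals, and otherwise both weights vanish.
   2. (probabilistic) [iid_perm_law]: an iid family relabelled by a
      permutation has the same joint law, because both laws agree on
      measurable rectangles, a pi-system generating the product sigma-algebra.
   3. (measurability) [measurable_weight]: the weight is a measurable function
      of the tuple of observations; the only delicate event, {Q_j < x}, is a
      counting condition ([kth_smallest_ltE]).
   The theorem follows by writing both integrands as the same measurable
   function of the original and of the relabelled tuple of observations. *)

From HB Require Import structures.
From mathcomp Require Import all_boot all_order all_algebra.
From mathcomp Require Import all_classical all_reals all_analysis.
From mathcomp Require Import fingroup perm measurable_realfun.
Import Order.TTheory GRing.Theory Num.Theory.
Local Open Scope classical_set_scope.
Local Open Scope ring_scope.

Section OrderStatistics.
Context {disp : Order.disp_t} {T : orderType disp}.
Local Open Scope order_scope.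

Lemma sorted_nth_ltE (x0 x : T) (t : seq T) p :
  sorted <=%O t -> (p < size t)%N ->
  (nth x0 t p < x) = (p < count (< x) t)%N.
Proof.
move=> t_sorted pt.
have leq_nth i l : (i <= l)%N -> (l < size t)%N -> nth x0 t i <= nth x0 t l.
  move=> il lt; apply: (sorted_leq_nth le_trans lexx) => //.
  by rewrite inE (leq_ltn_trans il lt).
apply/idP/idP => [tp_lt|].
  have prefix_lt : all (< x) (take p.+1 t).
    apply/(all_nthP x0) => i; rewrite size_takel // => ip.
    by rewrite nth_take //; exact: le_lt_trans (leq_nth i p ip pt) tp_lt.
  rewrite -(cat_take_drop p.+1 t) count_cat.
  by move: prefix_lt; rewrite all_count size_takel // => /eqP ->; rewrite leq_addr.
apply: contraLR; rewrite -!leNgt => x_le.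
have suffix_ge : count (< x) (drop p t) = 0%N.
  apply/eqP; rewrite -leqn0 leqNgt -has_count; apply/hasPn => y /(nthP x0) [i].
  rewrite size_drop ltn_subRL nth_drop => it <-; rewrite -leNgt.
  by rewrite (le_trans x_le) // leq_nth // ?leq_addr // addnC.
rewrite -(cat_take_drop p t) count_cat suffix_ge addn0.
by rewrite -leqNgt (leq_trans (count_size _ _)) // size_take pt.
Qed.

Lemma nth_sort_ltE (x0 x : T) (s : seq T) p : (p < size s)%N ->
  (nth x0 (sort <=%O s) p < x) = (p < count (< x) s)%N.
Proof.
move=> ps; rewrite sorted_nth_ltE ?size_sort ?sort_sorted //; last exact: le_total.
by have /seq.permP -> : perm_eq (sort <=%O s) s by rewrite perm_sort.
Qed.

End OrderStatistics.

Section Permutations.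
Variable T : finType.

Lemma perm_map_stable (s : seq T) (sg : {perm T}) :
  uniq s -> {mono sg : x / x \in s} -> perm_eq (map sg s) s.
Proof.
move=> s_uniq sg_stable; apply: uniq_perm => //.
  by rewrite map_inj_uniq //; exact: perm_inj.
move=> x; apply/mapP/idP => [[y ys ->]|xs]; first by rewrite sg_stable.
by exists (sg^-1 x)%g; rewrite ?permKV // -sg_stable permKV.
Qed.

Lemma tperm_stable (A : {set T}) j k : j \in A -> k \in A ->
  {mono tperm j k : x / x \in A}.
Proof. by move=> jA kA x; case: tpermP => [->|->|] //; rewrite jA kA. Qed.

End Permutations.

Section ConformalWeight.
Context {R : realType} {N : nat}.
Variables (alpha : R) (tau : N.-tuple R -> R) (C U Su : {set 'I_N}) (j k : 'I_N).

Definition weight {dO} {Om : measurableType dO} (T Rs : 'I_N -> Om -> R)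
    (a : 'I_N) (w : Om) : R :=
  (((Qj alpha tau T Rs C j w < Rs a w)%R && (T k w <= tauhat tau T w)%R
     && (Shat tau T U w == Su)) : bool)%:R /
  \sum_(i in j |: C) ((T i w <= tauhat tau T w)%R : bool)%:R.

Lemma weight_local {dO dO'} {Om : measurableType dO} {Om' : measurableType dO'}
    (T Rs : 'I_N -> Om -> R) (T' Rs' : 'I_N -> Om' -> R) a w w' :
  (forall i, T i w = T' i w') -> (forall i, Rs i w = Rs' i w') ->
  weight T Rs a w = weight T' Rs' a w'.
Proof.
move=> eqT eqRs.
have eq_th : tauhat tau T w = tauhat tau T' w'.
  by rewrite /tauhat; congr tau; apply: eq_mktuple.
have eq_Sh A : Shat tau T A w = Shat tau T' A w'.
  by apply/setP => i; rewrite !inE eq_th eqT.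
rewrite /weight /Qj !eq_Sh eq_th eqT eqRs /image_mem (eq_map eqRs).
by under eq_bigr do rewrite eqT.
Qed.

Lemma weight_ge0 {dO} {Om : measurableType dO} (T Rs : 'I_N -> Om -> R) a w :
  0 <= weight T Rs a w.
Proof. by rewrite divr_ge0 // sumr_ge0. Qed.

Hypothesis tau_sym : forall s s' : N.-tuple R, perm_eq s s' -> tau s = tau s'.

Lemma tauhat_perm {dO} {Om : measurableType dO} (T : 'I_N -> Om -> R)
    (sg : {perm 'I_N}) w :
  tauhat tau (fun i => T (sg i)) w = tauhat tau T w.
Proof.
apply: tau_sym; rewrite /= (map_comp (T^~ w) sg); apply: perm_map.
by apply: perm_map_stable; [exact: enum_uniq | move=> x; rewrite !mem_enum].
Qed.

Section Swap.
Context {dO : measure_display} {Om : measurableType dO}.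
Variables (T Rs : 'I_N -> Om -> R) (w : Om).
Let sg := tperm j k.
Let th := tauhat tau T w.

Lemma Shat_tperm A : T j w <= th -> T k w <= th ->
  Shat tau (fun i => T (sg i)) A w = Shat tau T A w.
Proof.
move=> Tj Tk; apply/setP => i; rewrite !inE tauhat_perm -/th.
by rewrite /sg; case: tpermP => [->|->|]; rewrite ?Tj ?Tk.
Qed.

Hypothesis kC : k \in C.

Lemma Qj_tperm : T j w <= th -> T k w <= th ->
  Qj alpha tau (fun i => T (sg i)) (fun i => Rs (sg i)) C j w =
  Qj alpha tau T Rs C j w.
Proof.
move=> Tj Tk; rewrite /Qj /= Shat_tperm // /kth_smallest; congr nth.
apply/perm_sortP; [exact: le_total | exact: le_trans | exact: le_anti |].
rewrite /image_mem (map_comp (Rs^~ w) sg); apply: perm_map.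
apply: perm_map_stable; first exact: enum_uniq.
by move=> x; rewrite !mem_enum tperm_stable ?setU11 // setU1r // inE kC.
Qed.

Hypothesis jSu : j \in Su.

(* If T_j and T_k are both
   selected this follows from the two lemmas above; otherwise both weights
   vanish, since {hat S_u = S_u} forces j, hence j or k after relabelling, to
   be selected. *)
Lemma weight_tperm :
  weight (fun i => T (sg i)) (fun i => Rs (sg i)) j w = weight T Rs k w.
Proof.
have eq_den : \sum_(i in j |: C) ((T (sg i) w <= th)%R : bool)%:R =
              \sum_(i in j |: C) ((T i w <= th)%R : bool)%:R :> R.
  rewrite [RHS](reindex_inj (@perm_inj _ sg)) /=.
  by apply: eq_bigl => i; rewrite tperm_stable ?setU11 // setU1r.
rewrite /weight tauhat_perm -/th eq_den; congr ((nat_of_bool _)%:R / _).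
rewrite /sg tpermL tpermR -/sg.
have [/andP[Tj Tk]|not_both] := boolP ((T j w <= th) && (T k w <= th)).
  by rewrite Qj_tperm // Shat_tperm // Tj Tk.
have selected_j : Shat tau T U w = Su -> T j w <= th.
  by move=> eq_Su; move: jSu; rewrite -eq_Su inE => /andP[].
have selected_k : Shat tau (fun i => T (sg i)) U w = Su -> T k w <= th.
  by move=> eq_Su; move: jSu; rewrite -eq_Su inE tauhat_perm /sg tpermL => /andP[].
apply/idP/idP => /andP[/andP[_ sel] /eqP eq_Su].
  by move: not_both; rewrite sel (selected_k eq_Su).
by move: not_both; rewrite sel (selected_j eq_Su).
Qed.

End Swap.

End ConformalWeight.

Section IidExchangeable.
Context {R : realType} {dO : measure_display} {Omega : measurableType dO}
  {dT : measure_display} {T : measurableType dT} {N : nat}.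
Variables (P : probability Omega R) (Z : 'I_N -> Omega -> T).

Definition tuple_of (f : 'I_N -> 'I_N) (w : Omega) : N.-tuple T :=
  [tuple Z (f i) w | i < N].

Lemma measurable_tuple_of (f : 'I_N -> 'I_N) :
  (forall i, measurable_fun setT (Z i)) -> measurable_fun setT (tuple_of f).
Proof.
move=> mZ; apply/measurable_fun_tnthP => i.
by rewrite (_ : _ \o _ = Z (f i)) //; apply/funext => w /=; rewrite tnth_mktuple.
Qed.

Definition rect (B : 'I_N -> set T) : set (N.-tuple T) :=
  [set z | forall i, B i (tnth z i)].

Definition rectangles : set (set (N.-tuple T)) :=
  [set A | exists2 B : 'I_N -> set T, (forall i, measurable (B i)) & A = rect B].

Lemma measurable_rect B : (forall i, measurable (B i)) -> measurable (rect B).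
Proof.
move=> mB; rewrite (_ : rect B = \bigcap_(i in setT) ((fun z => tnth z i) @^-1` B i)).
  apply: fin_bigcap_measurable; first exact: finite_finset.
  by move=> i _; rewrite -[_ @^-1` _]setTI; exact: measurable_tnth.
by apply/seteqP; split => z /= zB i //; [move=> _ | exact: zB I].
Qed.

Lemma rectangles_setI : setI_closed rectangles.
Proof.
move=> _ _ [B mB ->] [B' mB' ->]; exists (fun i => B i `&` B' i).
  by move=> i; exact: measurableI.
apply/seteqP; split => z /= => [[zB zB'] i | zBB']; first by split.
by split => i; have [] := zBB' i.
Qed.

Lemma measurable_tupleE : measurable = <<s rectangles >>.
Proof.
apply/seteqP; split; last first.
  apply: smallest_sub; first exact: sigma_algebra_measurable.
  by move=> _ [B mB ->]; exact: measurable_rect.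
apply: smallest_sub; first exact: smallest_sigma_algebra.
move=> A A_gen.
have [i [B mB <-]] : exists i,
    preimage_set_system setT (fun z : N.-tuple T => tnth z i) measurable A.
  move: A_gen; apply: (big_ind (fun X : set (set (N.-tuple T)) => X A -> _)).
  - by [].
  - by move=> X Y HX HY [/HX|/HY].
  - by move=> i _ Ai; exists i.
apply: sub_sigma_algebra; exists (fun l => if l == i then B else setT).
  by move=> l; case: ifP.
apply/seteqP; split => z /= => [[_ Bz] l|/(_ i)]; last by rewrite eqxx.
by case: eqP => [->|].
Qed.

Hypothesis hZ : iid P Z.

Lemma iid_rect (s : {perm 'I_N}) B : (forall i, measurable (B i)) ->
  P (tuple_of s @^-1` rect B) = (\prod_(i < N) P (Z i @^-1` B i))%E.
Proof.
have [_ [indep ident]] := hZ => mB.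
have -> : tuple_of s @^-1` rect B =
          \bigcap_(i in [set: 'I_N]) (Z i @^-1` B ((s^-1)%g i)).
  apply/seteqP; split => w /= wB i.
    by move=> _; move: (wB ((s^-1)%g i)); rewrite tnth_mktuple permKV.
  by rewrite tnth_mktuple; have := wB (s i) I; rewrite permK.
rewrite indep // (reindex_inj (@perm_inj _ s)) /=.
by apply: eq_bigr => i _; rewrite permK; exact: ident.
Qed.

Lemma iid_perm_law (s s' : {perm 'I_N}) (A : set (N.-tuple T)) : measurable A ->
  P (tuple_of s @^-1` A) = P (tuple_of s' @^-1` A).
Proof.
move=> mA; have mZ := hZ.1.
change (pushforward P (tuple_of s) A = pushforward P (tuple_of s') A).
apply: (measure_unique rectangles (fun=> setT) measurable_tupleE
  rectangles_setI) => //.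
- by move=> _; exists (fun=> setT) => //; apply/seteqP; split.
- by apply/seteqP; split => // z _; exists 0%N.
- exact: measurable_tuple_of.
- exact: measurable_tuple_of.
- move=> ? ? _ [B mB ->].
  change (P (tuple_of s @^-1` rect B) = P (tuple_of s' @^-1` rect B)).
  by rewrite !iid_rect.
- move=> ? _; change (P (tuple_of s @^-1` setT) < +oo)%E.
  by rewrite preimage_setT probability_setT ltry.
Qed.

End IidExchangeable.

Section Measurability.
Context {R : realType} {dT : measure_display} {TT : measurableType dT}.

(* bool carries the discrete sigma-algebra: every function out of it is measurable. *)
Lemma measurable_fun_of_bool {d} {V : measurableType d} (f : bool -> V) :
  measurable_fun setT f.
Proof. by move=> _ Y _; rewrite setTI. Qed.

Lemma measurable_all (I : Type) (s : seq I) (b : I -> TT -> bool) :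
  (forall i, measurable_fun setT (b i)) ->
  measurable_fun setT (fun z => all (b ^~ z) s).
Proof.
by move=> mb; elim: s => [|i s IHs] /=; [exact: measurable_cst | exact: measurable_and].
Qed.

Lemma measurable_has (I : Type) (s : seq I) (b : I -> TT -> bool) :
  (forall i, measurable_fun setT (b i)) ->
  measurable_fun setT (fun z => has (b ^~ z) s).
Proof.
by move=> mb; elim: s => [|i s IHs] /=; [exact: measurable_cst | exact: measurable_or].
Qed.

Lemma measurable_sum_bool (I : Type) (s : seq I) (P : pred I) (b : I -> TT -> bool) :
  (forall i, measurable_fun setT (b i)) ->
  measurable_fun setT (fun z => \sum_(i <- s | P i) (b i z)%:R : R).
Proof.
move=> mb; rewrite (_ : (fun z => _) = fun z => \sum_(i <- s) (P i && b i z)%:R).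
  apply: measurable_sum => i.
  apply: (measurableT_comp (measurable_fun_of_bool (fun c : bool => c%:R : R))).
  by apply: measurable_and => //; exact: measurable_cst.
by apply/funext => z; rewrite big_mkcond; apply: eq_bigr => i _; case: (P i).
Qed.

Lemma measurable_comp_natr {d} {V : measurableType d} (c : TT -> nat) (f : nat -> V) :
  measurable_fun setT (fun z => (c z)%:R : R) -> measurable_fun setT (f \o c).
Proof.
move=> mc _ Y _; rewrite setTI.
rewrite (_ : _ @^-1` _ = \bigcup_(n in f @^-1` Y) ((fun z => (c z)%:R : R) @^-1` [set n%:R])).
  apply: bigcup_measurable => n _; rewrite -[X in measurable X]setTI.
  exact: mc (measurable_set1 _).
apply/seteqP; split => [z Yz|z [n Yn /= /eqP]]; first by exists (c z).
by rewrite eqr_nat => /eqP ->.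
Qed.

Lemma measurable_count_gt (I : Type) (s : seq I) (b : I -> TT -> bool) p :
  (forall i, measurable_fun setT (b i)) ->
  measurable_fun setT (fun z => (p < count (b ^~ z) s)%N).
Proof.
move=> mb; elim: s p => [|i s IHs] p /=; first exact: measurable_cst.
rewrite (_ : (fun z => _) = fun z => (b i z && ((p == 0)%N ||
  (p.-1 < count (b ^~ z) s)%N)) || (p < count (b ^~ z) s)%N).
  apply: measurable_or => //; apply: measurable_and => //.
  by apply: measurable_or => //; exact: measurable_cst.
apply/funext => z; case: (b i z) => //=; case: p => [|p] //=.
by rewrite add1n ltnS; apply/esym/orb_idr => /ltnW.
Qed.

End Measurability.

Lemma kth_smallest_ltE {R : realType} q (s : seq R) x :
  (kth_smallest q s < x) =
  if (q.-1 < size s)%N then (q.-1 < count (< x) s)%N else 0 < x.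
Proof.
rewrite /kth_smallest; case: ltnP => qs; first exact: nth_sort_ltE.
by rewrite nth_default // size_sort.
Qed.

Section MeasurableWeight.
Context {R : realType} {dT : measure_display} {TT : measurableType dT} {N : nat}.
Variables (tau : N.-tuple R -> R) (T Rs : 'I_N -> TT -> R).
Hypotheses (mtau : measurable_fun setT tau)
  (mT : forall i, measurable_fun setT (T i))
  (mRs : forall i, measurable_fun setT (Rs i)).

Lemma measurable_tauhat : measurable_fun setT (tauhat tau T).
Proof.
apply: measurableT_comp => //; apply/measurable_fun_tnthP => i.
by rewrite (_ : _ \o _ = T i) //; apply/funext => z /=; rewrite tnth_mktuple.
Qed.

(* {hat S_A = S} is a finite conjunction of threshold comparisons. *)
Lemma measurable_Shat_eq (A S : {set 'I_N}) :
  measurable_fun setT (fun z => Shat tau T A z == S).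
Proof.
rewrite (_ : (fun z => _) = fun z => all (fun i =>
  ((i \in A) && (T i z <= tauhat tau T z)) == (i \in S)) (enum 'I_N)).
  apply: measurable_all => i.
  apply: (measurableT_comp (measurable_fun_of_bool (fun c => c == (i \in S)))).
  apply: measurable_and; first exact: measurable_cst.
  exact: measurable_fun_ler (mT i) measurable_tauhat.
apply/funext => z; apply/eqP/allP => [<- i _|eqS]; first by rewrite inE.
by apply/setP => i; rewrite inE; apply/eqP/eqS; rewrite mem_enum.
Qed.

Lemma measurable_kth_smallest_lt (I : Type) q (s : seq I) (x : TT -> R)
    (f : I -> TT -> R) :
  (forall i, measurable_fun setT (f i)) -> measurable_fun setT x ->
  measurable_fun setT (fun z => kth_smallest q [seq f i z | i <- s] < x z).
Proof.
move=> mf mx; rewrite (_ : (fun z => _) = fun z =>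
  if (q.-1 < size s)%N then (q.-1 < count (fun i => f i z < x z)%R s)%N
  else 0 < x z).
  case: (q.-1 < size s)%N; last by apply: measurable_fun_ltr => //; exact: measurable_cst.
  by apply: measurable_count_gt => i; exact: measurable_fun_ltr.
by apply/funext => z; rewrite kth_smallest_ltE size_map count_map.
Qed.

(* The event {Q_j < x}: a finite disjunction over the possible values S of
   the selected calibration set. *)
Lemma measurable_Qj_lt alpha C j (x : TT -> R) : measurable_fun setT x ->
  measurable_fun setT (fun z => Qj alpha tau T Rs C j z < x z).
Proof.
move=> mx; rewrite (_ : (fun z => _) = fun z => has (fun S =>
  (Shat tau T C z == S) &&
  (kth_smallest `|Num.ceil ((1 - alpha) * (#|S|%:R + 1))|%N
     [seq Rs i z | i in j |: S] < x z)) (enum {set 'I_N})).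
  apply: measurable_has => S; apply: measurable_and.
    exact: measurable_Shat_eq.
  exact: measurable_kth_smallest_lt.
apply/funext => z; apply/idP/hasP => [Qx|[S _ /andP[/eqP <- //]]].
by exists (Shat tau T C z); rewrite ?mem_enum ?eqxx.
Qed.

Lemma measurable_weight alpha C U Su j k a :
  measurable_fun setT (weight alpha tau C U Su j k T Rs a).
Proof.
apply: measurable_funM.
  apply: (measurableT_comp (measurable_fun_of_bool (fun c : bool => c%:R : R))).
  apply: measurable_and; last exact: measurable_Shat_eq.
  apply: measurable_and; first exact: measurable_Qj_lt.
  exact: measurable_fun_ler (mT k) measurable_tauhat.
rewrite (_ : (fun z => _) = (fun c : nat => c%:R^-1 : R) \o
  fun z => (\sum_(i in j |: C) (T i z <= tauhat tau T z)%R)%N).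
  apply: (measurable_comp_natr (R := R)).
  under eq_fun do rewrite natr_sum.
  apply: measurable_sum_bool => i.
  exact: measurable_fun_ler (mT i) measurable_tauhat.
by apply/funext => z; rewrite /= natr_sum.
Qed.

End MeasurableWeight.

Lemma integral_same_law {R : realType} {dO dT : measure_display}
    {Omega : measurableType dO} {TT : measurableType dT}
    (P : {measure set Omega -> \bar R}) (phi psi : Omega -> TT) (F : TT -> R) :
  measurable_fun setT phi -> measurable_fun setT psi ->
  measurable_fun setT F -> (forall z, 0 <= F z) ->
  (forall A, measurable A -> P (phi @^-1` A) = P (psi @^-1` A)) ->
  (\int[P]_w (F (phi w))%:E = \int[P]_w (F (psi w))%:E)%E.
Proof.
move=> mphi mpsi mF F_ge0 same_law.
have push chi : measurable_fun setT chi ->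
    (\int[P]_w (F (chi w))%:E = \int[pushforward P chi]_z (F z)%:E)%E.
  move=> mchi; rewrite ge0_integral_pushforward //.
    exact/measurable_EFinP.
  by move=> z _; rewrite lee_fin.
rewrite (push _ mphi) (push _ mpsi); apply: eq_measure_integral => A mA _.
exact: same_law.
Qed.

Section Observations.
Context {R : realType} {d N : nat} (muhat g : d.-tuple R -> R).

Definition score_of (i : 'I_N) (z : N.-tuple (d.-tuple R * R)) : R :=
  g (tnth z i).1.

Definition residual_of (i : 'I_N) (z : N.-tuple (d.-tuple R * R)) : R :=
  `|(tnth z i).2 - muhat (tnth z i).1|.

Lemma measurable_score_of i : measurable_fun setT g ->
  measurable_fun setT (score_of i).
Proof.
move=> mg; apply: measurableT_comp => //; apply: measurableT_comp => //.
exact: measurable_tnth.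
Qed.

Lemma measurable_residual_of i : measurable_fun setT muhat ->
  measurable_fun setT (residual_of i).
Proof.
move=> mmuhat; apply: measurableT_comp; first exact: normr_measurable.
apply: measurable_funB.
  by apply: measurableT_comp => //; exact: measurable_tnth.
apply: measurableT_comp => //; apply: measurableT_comp => //.
exact: measurable_tnth.
Qed.

End Observations.

Theorem lemma9 (R : realType) (dO : measure_display) (Omega : measurableType dO)
  (P : probability Omega R) (d n m : nat)
  (C U : {set 'I_(n + m)})
  (X : 'I_(n + m) -> Omega -> d.-tuple R) (Y : 'I_(n + m) -> Omega -> R)
  (muhat g : d.-tuple R -> R) (tau : (n + m).-tuple R -> R) (alpha : R)
  (Su : {set 'I_(n + m)}) (j k : 'I_(n + m)) :
  #|C| = n -> #|U| = m -> [disjoint C & U]%bool ->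
  iid P (fun i w => (X i w, Y i w)) ->
  measurable_fun setT muhat -> measurable_fun setT g ->
  measurable_fun setT tau ->
  (forall s s' : (n + m).-tuple R, perm_eq s s' -> tau s = tau s') ->
  0 < alpha < 1 ->
  Su \subset U -> j \in Su -> k \in C ->
  let T := fun i w => g (X i w) in
  let Rs := fun i w => (`|Y i w - muhat (X i w)| : R) in
  let th := tauhat tau T in
  let den := fun w => \sum_(i in j |: C) ((T i w <= th w)%R : bool)%:R in
  (\int[P]_w ((((Rs j w > Qj alpha tau T Rs C j w)%R && (T k w <= th w)%R
                 && (Shat tau T U w == Su)) : bool)%:R / den w)%:E =
   \int[P]_w ((((Rs k w > Qj alpha tau T Rs C j w)%R && (T k w <= th w)%R
                 && (Shat tau T U w == Su)) : bool)%:R / den w)%:E)%E.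
Proof.
move=> _ _ _ iidZ mmuhat mg mtau tau_sym _ _ jSu kC T Rs th den.
pose W := weight alpha tau C U Su j k (score_of g) (residual_of muhat) j.
pose Zt := tuple_of (fun i w => (X i w, Y i w)) (1 : {perm 'I_(n + m)})%g.
pose Zs := tuple_of (fun i w => (X i w, Y i w)) (tperm j k).
have lhsE w : weight alpha tau C U Su j k T Rs j w = W (Zt w).
  by apply: weight_local => i; rewrite /score_of /residual_of tnth_mktuple perm1.
have rhsE w : weight alpha tau C U Su j k T Rs k w = W (Zs w).
  rewrite -(weight_tperm alpha tau C U Su j k tau_sym T Rs w kC jSu).
  by apply: weight_local => i; rewrite /score_of /residual_of tnth_mktuple.
transitivity (\int[P]_w (W (Zt w))%:E)%E.
  by apply: eq_integral => w _; rewrite -lhsE.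
transitivity (\int[P]_w (W (Zs w))%:E)%E; last first.
  by apply: eq_integral => w _; rewrite -rhsE.
apply: integral_same_law; try exact: measurable_tuple_of iidZ.1.
- by apply: measurable_weight => // i;
    [exact: measurable_score_of | exact: measurable_residual_of].
- exact: weight_ge0.
- exact: iid_perm_law.
Qed.
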